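(* Let $A$ be a physical system of dimension $m$ with Hamiltonian $H^A$ and an orthonormal energy eigenbasis $\{|x\rangle\}_{x=1}^m$. Let $\sigma$ be an arbitrary density matrix on $A$ and $p_x\coloneqq\langle x|\sigma|x\rangle$. Then the pure state $|\psi\rangle\coloneqq\sum_{x=1}^m\sqrt{p_x}|x\rangle$ can be converted to $\sigma$ by a time-translation covariant channel, i.e. there exists a time-translation covariant channel $\mathcal{E}:A\to A$ with $\mathcal{E}(|\psi\rangle\langle\psi|)=\sigma$.
   Context: A channel (CPTP map) $\mathcal{E}:A\to A$ is time-translation covariant if $\mathcal{E}(e^{-iH^At}\rho e^{iH^At})=e^{-iH^At}\mathcal{E}(\rho)e^{iH^At}$ for all $t\in\mathbb{R}$ and all states $\rho$ on $A$. *)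

From HB Require Import structures.
From mathcomp Require Import all_boot all_order all_algebra.
From mathcomp Require Import reals trigo.
From mathcomp Require Import complex mxtens.

Set Implicit Arguments.
Unset Strict Implicit.
Unset Printing Implicit Defensive.

Import Order.TTheory GRing.Theory Num.Theory.
Local Open Scope ring_scope.
Local Open Scope complex_scope.

(* Throughout, a system A of dimension m is described in coordinates w.r.t.
   its orthonormal energy eigenbasis {|x>}, x : 'I_m. *)

Section QDefs.
Variable R : realType.
Local Notation C := (R[i]).

Definition adj {p q : nat} (A : 'M[C]_(p, q)) : 'M[C]_(q, p) :=
  (map_mx Num.conj A)^T.

Definition psd {n : nat} (A : 'M[C]_n) : Prop :=
  forall v : 'cV[C]_n, 0 <= (adj v *m A *m v) 0 0.

Definition density {n : nat} (rho : 'M[C]_n) : Prop :=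
  psd rho /\ \tr rho = 1.

(* (id_k (x) E) acting on X in M_k (x) M_n, with the tensor index
   convention of mxtens (the one used by A *t B). *)
Definition ampliate (k : nat) {n : nat} (E : 'M[C]_n -> 'M[C]_n)
    (X : 'M[C]_(k * n)) : 'M[C]_(k * n) :=
  \matrix_(i, j)
    E (\matrix_(a, b) X (mxtens_index ((mxtens_unindex i).1, a))
                         (mxtens_index ((mxtens_unindex j).1, b)))
      (mxtens_unindex i).2 (mxtens_unindex j).2.

Definition completely_positive {n : nat} (E : 'M[C]_n -> 'M[C]_n) : Prop :=
  forall (k : nat) (X : 'M[C]_(k * n)), psd X -> psd (@ampliate k n E X).

Definition trace_preserving {n : nat} (E : 'M[C]_n -> 'M[C]_n) : Prop :=
  forall X : 'M[C]_n, \tr (E X) = \tr X.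

Definition channel {n : nat} (E : 'M[C]_n -> 'M[C]_n) : Prop :=
  linear E /\ completely_positive E /\ trace_preserving E.

Definition expmi (theta : R) : C := (cos theta)%:C - 'i * (sin theta)%:C.

Definition hamiltonian {n : nat} (En : 'I_n -> R) : 'M[C]_n :=
  diag_mx (\row_x (En x)%:C).

Definition evol {n : nat} (En : 'I_n -> R) (t : R) : 'M[C]_n :=
  diag_mx (\row_x expmi (En x * t)).

Definition tt_covariant {n : nat} (En : 'I_n -> R)
    (E : 'M[C]_n -> 'M[C]_n) : Prop :=
  forall (t : R) (rho : 'M[C]_n), density rho ->
    E (evol En t *m rho *m adj (evol En t))
    = evol En t *m E rho *m adj (evol En t).

Definition ketbra {n : nat} (psi : 'cV[C]_n) : 'M[C]_n := psi *m adj psi.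

End QDefs.

(* The state sigma is the Schur (entrywise) product of |psi><psi| with the
   correlation matrix Q_xy = sigma_xy / sqrt(p_x p_y) of sigma, which is
   positive semidefinite as D sigma D^* plus a nonnegative diagonal, with
   D = diag(p_x^(-1/2)).  Entrywise multiplication by a positive semidefinite
   Q with unit diagonal is a channel: it is trace preserving since Q_xx = 1,
   and completely positive since, for a Gram factorisation Q = G^* G, the
   ampliated quadratic form splits into a sum of quadratic forms of the input.
   It commutes with conjugation by diagonal matrices such as e^{-iHt}, hence
   it is time-translation covariant. *)

From HB Require Import structures.
From mathcomp Require Import all_boot all_order all_algebra.
From mathcomp Require Import reals trigo.
From mathcomp Require Import complex mxtens.
From mathcomp Require Import spectral sesquilinear.
From mathcomp Require Import ring.
Set Implicit Arguments.
Unset Strict Implicit.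
Unset Printing Implicit Defensive.

Import Order.TTheory GRing.Theory Num.Theory.
Local Open Scope ring_scope.

Section Psd.
Variable R : realType.
Local Notation C := R[i].

Lemma adjE p q (A : 'M[C]_(p, q)) i j : adj A i j = (A j i)^*.
Proof. by rewrite !mxE. Qed.

Lemma adjM p q r (A : 'M[C]_(p, q)) (B : 'M[C]_(q, r)) :
  adj (A *m B) = adj B *m adj A.
Proof. by rewrite /adj map_mxM trmx_mul. Qed.

Lemma adjD p q (A B : 'M[C]_(p, q)) : adj (A + B) = adj A + adj B.
Proof. by apply/matrixP=> i j; rewrite !mxE rmorphD. Qed.

Lemma adjZ p q (c : C) (A : 'M[C]_(p, q)) : adj (c *: A) = c^* *: adj A.
Proof. by apply/matrixP=> i j; rewrite !mxE rmorphM. Qed.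

Lemma adjK p q (A : 'M[C]_(p, q)) : adj (adj A) = A.
Proof. by apply/matrixP=> i j; rewrite !mxE conjCK. Qed.

Lemma adj_trmxC p q (A : 'M[C]_(p, q)) : adj A = (A ^t*)%sesqui.
Proof. by apply/matrixP=> i j; rewrite !mxE. Qed.

Lemma adj_diag_mx n (d : 'rV[C]_n) :
  adj (diag_mx d) = diag_mx (map_mx Num.conj d).
Proof. by rewrite /adj map_diag_mx tr_diag_mx. Qed.

Lemma formE n (S : 'M[C]_n) (u v : 'cV_n) :
  (adj u *m S *m v) 0 0 = \sum_i \sum_j (u i 0)^* * S i j * v j 0.
Proof.
rewrite exchange_big !mxE; apply: eq_bigr => j _; rewrite !mxE mulr_suml.
by apply: eq_bigr => i _; rewrite !mxE.
Qed.

Lemma form_delta_mx n (S : 'M[C]_n) a b :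
  (adj (delta_mx a 0 : 'cV_n) *m S *m (delta_mx b 0 : 'cV_n)) 0 0 = S a b.
Proof. by rewrite /adj map_delta_mx trmx_delta -rowE -colE !mxE. Qed.

Lemma form_addZ n (S : 'M[C]_n) (u v : 'cV_n) (c : C) :
  let form x y := (adj x *m S *m y) 0 0 in
  form (u + c *: v) (u + c *: v) =
    form u u + c * form u v + c^* * form v u + c^* * c * form v v.
Proof.
rewrite /= adjD adjZ !mulmxDl !mulmxDr -!scalemxAl -!scalemxAr !mxE.
by ring.
Qed.

Lemma conj_eq_of_real (z w : C) :
  z + w \is Num.real -> 'i * (z - w) \is Num.real -> z^* = w.
Proof.
move=> /CrealP; rewrite rmorphD /= => sum_real /CrealP.
rewrite rmorphM rmorphB /= conjCi => diff_imag.
have {}diff_imag : z^* - w^* = w - z.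
  apply: (mulfI (neq0Ci C)); rewrite -[LHS]opprK -mulNr diff_imag; ring.
have -> : z^* = ((z^* + w^*) + (z^* - w^*)) / 2 by field.
by rewrite sum_real diff_imag; field.
Qed.

Lemma psd_ge0 n (S : 'M[C]_n) x : psd S -> 0 <= S x x.
Proof. by move=> /(_ (delta_mx x 0)); rewrite form_delta_mx. Qed.

Lemma psd_adj n (S : 'M[C]_n) : psd S -> adj S = S.
Proof.
move=> S_psd; apply/matrixP => a b; rewrite !mxE.
(* Polarisation: the form is real at [e_b + c e_a] for [c = 1] and [c = 'i]. *)
have real_diag x : S x x \is Num.real by apply/ger0_real/psd_ge0.
have real_cross c : c * S b a + c^* * S a b \is Num.real.
  have real_form :
      S b b + c * S b a + c^* * S a b + c^* * c * S a a \is Num.real.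
    have := form_addZ S (delta_mx b 0) (delta_mx a 0) c.
    by rewrite /= !form_delta_mx => <-; apply: ger0_real; apply: S_psd.
  have real_square : c^* * c * S a a \is Num.real.
    by rewrite rpredM // mulrC ger0_real ?mul_conjC_ge0.
  have -> : c * S b a + c^* * S a b
          = S b b + c * S b a + c^* * S a b + c^* * c * S a a
            - S b b - c^* * c * S a a by ring.
  by rewrite !rpredB.
apply: conj_eq_of_real; first by have := real_cross 1; rewrite conjC1 !mul1r.
by have := real_cross 'i; rewrite conjCi mulNr -mulrBr.
Qed.

Lemma psdD n (S T : 'M[C]_n) : psd S -> psd T -> psd (S + T).
Proof. by move=> S_psd T_psd v; rewrite mulmxDr mulmxDl mxE addr_ge0. Qed.

Lemma psd_conj n p (S : 'M[C]_n) (A : 'M[C]_(p, n)) :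
  psd S -> psd (A *m S *m adj A).
Proof.
by move=> S_psd v; have := S_psd (adj A *m v); rewrite adjM adjK !mulmxA.
Qed.

Lemma psd_gram n p (W : 'M[C]_(p, n)) : psd (adj W *m W).
Proof.
move=> v; rewrite mulmxA -adjM -mulmxA mxE; apply: sumr_ge0 => k _.
by rewrite !mxE mulrC mul_conjC_ge0.
Qed.

Lemma gram_diag_sqrt n (d : 'rV[C]_n) : (forall k, 0 <= d 0 k) ->
  let D := diag_mx (map_mx sqrtC d) in adj D *m D = diag_mx d.
Proof.
move=> d_ge0 /=; apply/matrixP => i j; rewrite adj_diag_mx mul_diag_mx !mxE.
have [->|_] := eqVneq i j; last by rewrite !mulr0n mulr0.
by rewrite !mulr1n geC0_conj ?sqrtC_ge0 // -expr2 sqrtCK.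
Qed.

Lemma psd_diag_mx n (d : 'rV[C]_n) : (forall k, 0 <= d 0 k) -> psd (diag_mx d).
Proof. by move=> /gram_diag_sqrt <-; apply: psd_gram. Qed.

Lemma psd_decomp n (S : 'M[C]_n) : psd S -> exists W : 'M[C]_n, S = adj W *m W.
Proof.
move=> S_psd.
have S_herm : S \is hermsymmx.
  by apply/is_hermitianmxP; rewrite expr0 scale1r -adj_trmxC psd_adj.
have /orthomx_spectralP := hermitian_normalmx S_herm.
set P := spectralmx S; set d := spectral_diag S.
have P_unitary : P \is unitarymx := spectral_unitarymx S.
rewrite invmx_unitary // -adj_trmxC => S_spectral.
have PadjP : P *m adj P = 1%:M by rewrite adj_trmxC; apply/unitarymxP.
have d_ge0 k : 0 <= d 0 k.
  have := psd_ge0 k (psd_conj P S_psd).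
  rewrite S_spectral !mulmxA PadjP mul1mx -mulmxA PadjP mulmx1.
  by rewrite mxE eqxx mulr1n.
exists (diag_mx (map_mx sqrtC d) *m P).
by rewrite adjM mulmxA -(mulmxA (adj P)) gram_diag_sqrt.
Qed.

Lemma psd_row_eq0 n (S : 'M[C]_n) x y : psd S -> S x x = 0 -> S x y = 0.
Proof.
move=> /psd_decomp[W ->]; rewrite !mxE.
under eq_bigr do rewrite adjE; move=> Wx_norm.
have Wx0 k : W k x = 0.
  apply/eqP; rewrite -mul_conjC_eq0 mulrC; apply/eqP; move: k isT.
  by apply/psumr_eq0P => // k _; rewrite mulrC mul_conjC_ge0.
by apply: big1 => k _; rewrite adjE Wx0 conjC0 mul0r.
Qed.

End Psd.

Section Schur.
Variable R : realType.
Local Notation C := R[i].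

Definition schur n (Q X : 'M[C]_n) : 'M[C]_n := \matrix_(x, y) (Q x y * X x y).

Lemma schur_linear n (Q : 'M[C]_n) : linear (schur Q).
Proof. by move=> a X Y; apply/matrixP => x y; rewrite !mxE; ring. Qed.

Lemma schur_tp n (Q : 'M[C]_n) :
  (forall x, Q x x = 1) -> trace_preserving (schur Q).
Proof.
by move=> Q1 X; rewrite /mxtrace; apply: eq_bigr => x _; rewrite mxE Q1 mul1r.
Qed.

Lemma ampliate_schurE k n (Q : 'M[C]_n) (X : 'M[C]_(k * n)) i j :
  ampliate (schur Q) X i j
  = Q (mxtens_unindex i).2 (mxtens_unindex j).2 * X i j.
Proof. by rewrite !mxE -!surjective_pairing !mxtens_unindexK. Qed.

Lemma schur_cp n (Q : 'M[C]_n) : psd Q -> completely_positive (schur Q).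
Proof.
move=> /psd_decomp[G QE] k X X_psd v.
pose u r : 'cV[C]_(k * n) := \col_i (G r (mxtens_unindex i).2 * v i 0).
suff -> : (adj v *m ampliate (schur Q) X *m v) 0 0
          = \sum_r (adj (u r) *m X *m u r) 0 0.
  by apply: sumr_ge0 => r _; apply: X_psd.
under [RHS]eq_bigr do rewrite formE.
rewrite formE [RHS]exchange_big; apply: eq_bigr => i _.
rewrite [RHS]exchange_big; apply: eq_bigr => j _.
rewrite ampliate_schurE QE !mxE mulr_suml mulr_sumr mulr_suml.
apply: eq_bigr => r _.
by rewrite /u !mxE rmorphM; ring.
Qed.

Lemma schur_conj_diag n (Q X : 'M[C]_n) (d : 'rV[C]_n) :
  schur Q (diag_mx d *m X *m adj (diag_mx d))
  = diag_mx d *m schur Q X *m adj (diag_mx d).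
Proof.
apply/matrixP => x y.
by rewrite adj_diag_mx !mul_mx_diag !mul_diag_mx !mxE; ring.
Qed.

Lemma schur_tt_covariant n (En : 'I_n -> R) (Q : 'M[C]_n) :
  tt_covariant En (schur Q).
Proof. by move=> t rho _; rewrite schur_conj_diag. Qed.

End Schur.

Section Correlation.
Variables (R : realType) (n : nat) (sigma : 'M[R[i]]_n).

(* Rows with [sigma x x = 0] are killed by the junk value [0^-1 = 0]; the
   second summand puts a 1 on their diagonal entry instead. *)
Definition correlation_mx : 'M[R[i]]_n :=
  let D := diag_mx (\row_x (sqrtC (sigma x x))^-1) in
  D *m sigma *m adj D + diag_mx (\row_x (sigma x x == 0)%:R).

Hypothesis sigma_psd : psd sigma.

Lemma correlation_mxE x y :
  correlation_mx x y = sigma x y / (sqrtC (sigma x x) * sqrtC (sigma y y))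
                       + ((x == y) && (sigma x x == 0))%:R.
Proof.
rewrite /correlation_mx /= adj_diag_mx mul_mx_diag mul_diag_mx !mxE.
rewrite geC0_conj ?invr_ge0 ?sqrtC_ge0 ?psd_ge0 //; congr (_ + _).
  by rewrite invfM mulrCA mulrA.
by case: (x == y); rewrite ?mulr1n ?mulr0n.
Qed.

Lemma psd_correlation_mx : psd correlation_mx.
Proof.
apply: psdD; first exact: psd_conj.
by apply: psd_diag_mx => x; rewrite mxE ler0n.
Qed.

Lemma correlation_mx_diag x : correlation_mx x x = 1.
Proof.
rewrite correlation_mxE eqxx /=; have [->|sigma_x] := eqVneq (sigma x x) 0.
  by rewrite mul0r add0r.
by rewrite -expr2 sqrtCK divff // addr0.
Qed.

Lemma schur_correlation_ketbra :
  schur correlation_mx (ketbra (\col_x sqrtC (sigma x x))) = sigma.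
Proof.
apply/matrixP => x y; rewrite mxE correlation_mxE !mxE big_ord1 !mxE.
rewrite geC0_conj ?sqrtC_ge0 ?psd_ge0 //.
have [sigma_x|sigma_x] := eqVneq (sigma x x) 0.
  by rewrite psd_row_eq0 // sigma_x sqrtC0 !(mul0r, mulr0).
have [sigma_y|sigma_y] := eqVneq (sigma y y) 0.
  have sigma_xy : sigma x y = 0.
    by rewrite -(psd_adj sigma_psd) adjE psd_row_eq0 ?conjC0.
  by rewrite sigma_xy sigma_y sqrtC0 !(mul0r, mulr0).
by rewrite andbF addr0 divfK // mulf_neq0 // sqrtC_eq0.
Qed.

End Correlation.

Theorem corollary1 (R : realType) (m : nat) (En : 'I_m -> R)
    (sigma : 'M[R[i]]_m) :
  density sigma ->
  let psi : 'cV[R[i]]_m := \col_x sqrtC (sigma x x) in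
  exists E : 'M[R[i]]_m -> 'M[R[i]]_m,
    channel E /\ tt_covariant En E /\ E (ketbra psi) = sigma.
Proof.
move=> [sigma_psd _] psi; exists (schur (correlation_mx sigma)).
split; [split; [|split] | split].
- exact: schur_linear.
- exact/schur_cp/psd_correlation_mx.
- exact/schur_tp/correlation_mx_diag.
- exact: schur_tt_covariant.
- exact: schur_correlation_ketbra.
Qed.
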